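(* Let $n,d\ge 1$, let $X\in\mathbb{R}^{d\times n}$ have columns $x_1,\dots,x_n\in\mathbb{R}^d$, let $y=(y_1,\dots,y_n)^T\in\{-1,+1\}^n$, and set $Z=X\,\mathrm{diag}(y)\in\mathbb{R}^{d\times n}$. Let $q>0$, $C>0$, and let $e\in\mathbb{R}^n$ be a vector with all entries positive and $\|e\|_\infty=1$. Define $\theta_q:\mathbb{R}\to\mathbb{R}\cup\{+\infty\}$ by $\theta_q(t)=t^{-q}$ if $t>0$ and $\theta_q(t)=+\infty$ if $t\le 0$. Consider the primal problem $$\min\Big\{\Phi(r,\xi):=\sum_{i=1}^n\theta_q(r_i)+C\langle e,\xi\rangle \;\Big|\; Z^Tw+\beta y+\xi-r=0,\ \|w\|\le 1,\ \xi\ge 0,\ r,\xi\in\mathbb{R}^n,\ w\in\mathbb{R}^d,\ \beta\in\mathbb{R}\Big\}.$$ Let $\kappa=\frac{q+1}{q}\,q^{\frac{1}{q+1}}$. Then the Lagrangian dual of this problem (formed with a multiplier $\alpha\in\mathbb{R}^n$ for the equality constraint, $\eta\in\mathbb{R}^n_{+}$ for $\xi\ge0$, and $\lambda\ge 0$ for the constraint $\tfrac12(\|w\|^2-1)\le 0$) is $$-\min_{\alpha\in\mathbb{R}^n}\Big\{\Psi(\alpha):=\|Z\alpha\|-\kappa\sum_{i=1}^n\alpha_i^{\frac{q}{q+1}}\;\Big|\;0\le\alpha\le Ce,\ \langle y,\alpha\rangle=0\Big\}.$$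
   Context: $\|\cdot\|$ denotes the Euclidean norm and $\langle\cdot,\cdot\rangle$ the standard inner product; vector inequalities are componentwise. *)

From HB Require Import structures.
From mathcomp Require Import all_boot all_order all_algebra.
From mathcomp Require Import all_classical all_reals all_analysis.
Set Implicit Arguments. Unset Strict Implicit. Unset Printing Implicit Defensive.
Import Order.TTheory GRing.Theory Num.Theory.
Local Open Scope ring_scope.
Local Open Scope classical_set_scope.

Section Defs.
Variable R : realType.

Definition dotv (m : nat) (a b : 'cV[R]_m) : R := \sum_(i < m) a i 0 * b i 0.
Definition normv (m : nat) (a : 'cV[R]_m) : R := Num.sqrt (dotv a a).

Definition theta (q t : R) : \bar R :=
  if 0 < t then (t `^ (- q))%:E else +oo%E.

Definition Zmat (d n : nat) (X : 'M[R]_(d, n)) (y : 'cV[R]_n) : 'M[R]_(d, n) :=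
  X *m diag_mx y^T.

Definition Phi (n : nat) (q C : R) (e r xi : 'cV[R]_n) : \bar R :=
  ((\sum_(i < n) theta q (r i ord0)) + (C * dotv e xi)%:E)%E.

Definition Lagr (d n : nat) (X : 'M[R]_(d, n)) (y : 'cV[R]_n) (q C : R)
  (e : 'cV[R]_n) (r xi : 'cV[R]_n) (w : 'cV[R]_d) (beta : R)
  (alpha eta : 'cV[R]_n) (lam : R) : \bar R :=
  (Phi q C e r xi
   + (dotv alpha (r - (Zmat X y)^T *m w - beta *: y - xi)
      - dotv eta xi
      + lam / 2 * (normv w ^+ 2 - 1))%:E)%E.

Definition dualfun (d n : nat) (X : 'M[R]_(d, n)) (y : 'cV[R]_n) (q C : R)
  (e alpha eta : 'cV[R]_n) (lam : R) : \bar R :=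
  ereal_inf [set v | exists r xi (w : 'cV[R]_d) beta,
                       v = Lagr X y q C e r xi w beta alpha eta lam].

Definition kappa (q : R) : R := (q + 1) / q * q `^ (1 / (q + 1)).

Definition Psi (d n : nat) (X : 'M[R]_(d, n)) (y : 'cV[R]_n) (q : R)
  (alpha : 'cV[R]_n) : R :=
  normv (Zmat X y *m alpha) - kappa q * \sum_(i < n) alpha i 0 `^ (q / (q + 1)).

Definition dual_feasible (n : nat) (y : 'cV[R]_n) (C : R) (e alpha : 'cV[R]_n)
  : Prop :=
  (forall i, 0 <= alpha i 0 /\ alpha i 0 <= C * e i 0) /\ dotv y alpha = 0.

End Defs.

From HB Require Import structures.
From mathcomp Require Import all_boot all_order all_algebra.
From mathcomp Require Import all_classical all_reals all_analysis.
From mathcomp Require Import ring lra.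
Import Order.TTheory GRing.Theory Num.Theory.
Local Open Scope ring_scope.
Local Open Scope classical_set_scope.

(* The Lagrangian separates in the primal variables.  Its infimum over xi and
   beta is -oo unless eta = C e - alpha and <y, alpha> = 0, which with eta >= 0
   gives the box constraint alpha <= C e.  For r_i > 0 the term
   r_i^(-q) + alpha_i r_i has infimum kappa alpha_i^(q/(q+1)) when alpha_i >= 0
   (weighted AM-GM, i.e. convexity of exp, with equality at
   r_i = (q/alpha_i)^(1/(q+1))) and -oo when alpha_i < 0.  In w, the term
   -<Z alpha, w> + lambda/2 (|w|^2 - 1) is at least -|Z alpha| for
   lambda = |Z alpha|, while w = Z alpha / |Z alpha| brings it down to
   -|Z alpha| for every lambda >= 0. *)

Section ScalarConjugate.
Context {R : realType}.
Implicit Types (q a t s u v : R).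

Lemma powR_lnE a x : 0 < a -> a `^ x = expR (x * ln a).
Proof. by move=> a0; rewrite /powR gt_eqF. Qed.

Lemma expR_convex s u v : 0 <= s <= 1 ->
  expR (s * u + (1 - s) * v) <= s * expR u + (1 - s) * expR v.
Proof. by move=> /andP[s0 s1]; exact: (convex_expR (Itv01 s0 s1)). Qed.

Lemma kappa_powRE q a : 0 < q -> 0 < a ->
  kappa q * a `^ (q / (q + 1)) =
  expR (ln (q + 1) - q / (q + 1) * ln q + q / (q + 1) * ln a).
Proof.
move=> q0 a0; have q10 : 0 < q + 1 by lra.
rewrite /kappa; have -> : (q + 1) / q = expR (ln (q + 1) - ln q) by rewrite expRD expRN !lnK.
rewrite !powR_lnE // -!expRD; congr expR; field; lra.
Qed.

Lemma kappa_le_powRN_add q a t : 0 < q -> 0 <= a -> 0 < t ->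
  kappa q * a `^ (q / (q + 1)) <= t `^ (- q) + a * t.
Proof.
move=> q0; rewrite le_eqVlt => /predU1P[<-|a0] t0.
  by rewrite powR0 ?mulf_neq0 ?invr_eq0 ?mulr0 ?mul0r ?addr0 ?powR_ge0 //; lra.
have q10 : 0 < q + 1 by lra.
have s01 : 0 <= (q + 1)^-1 <= 1 by rewrite invr_ge0 invf_le1; lra.
have -> : t `^ (- q) = (q + 1)^-1 * expR (ln (q + 1) - q * ln t).
  by rewrite powR_lnE // expRD lnK ?posrE // mulKf ?mulNr; lra.
have -> : a * t = q / (q + 1) * expR (ln (q + 1) - ln q + ln a + ln t).
  by rewrite !expRD expRN !lnK ?posrE //; field; lra.
rewrite kappa_powRE //.
have -> : q / (q + 1) = 1 - (q + 1)^-1 by field; lra.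
set u := ln (q + 1) - q * ln t; set v := ln (q + 1) - ln q + ln a + ln t.
have -> : ln (q + 1) - (1 - (q + 1)^-1) * ln q + (1 - (q + 1)^-1) * ln a =
          (q + 1)^-1 * u + (1 - (q + 1)^-1) * v by rewrite /u /v; field; lra.
exact: expR_convex.
Qed.

Lemma powRN_add_eq_kappa q a : 0 < q -> 0 < a ->
  ((q / a) `^ (q + 1)^-1) `^ (- q) + a * (q / a) `^ (q + 1)^-1 =
  kappa q * a `^ (q / (q + 1)).
Proof.
move=> q0 a0; have q10 : 0 < q + 1 by lra.
rewrite -powRrM kappa_powRE // !powR_lnE ?divr_gt0 // ln_div ?posrE //.
have lnKM x y : 0 < x -> x * expR y = expR (ln x + y).
  by move=> x0; rewrite expRD lnK ?posrE.
rewrite lnKM //.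
have -> : ln a + (q + 1)^-1 * (ln q - ln a) = ln q + (q + 1)^-1 * - q * (ln q - ln a).
  by field; lra.
have -> : ln (q + 1) - q / (q + 1) * ln q + q / (q + 1) * ln a =
          ln (q + 1) + (q + 1)^-1 * - q * (ln q - ln a) by field; lra.
by rewrite -!lnKM //; ring.
Qed.

Lemma exists_powRN_eq {q eps} : 0 < q -> 0 < eps -> exists2 t, 0 < t & t `^ (- q) = eps.
Proof.
move=> q0 e0; exists (eps `^ (- q^-1)); first exact: powR_gt0.
by rewrite -powRrM mulrNN mulVf ?gt_eqF ?powRr1 ?ltW.
Qed.

Lemma exists_powRN_add_le_kappa {q a eps} : 0 < q -> 0 <= a -> 0 < eps ->
  exists2 t, 0 < t & t `^ (- q) + a * t <= kappa q * a `^ (q / (q + 1)) + eps.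
Proof.
move=> q0; rewrite le_eqVlt => /predU1P[<- | a0] e0.
  have [t t0 <-] := exists_powRN_eq q0 e0; exists t => //.
  by rewrite !mul0r addr0 powR0 ?mulr0 ?add0r // mulf_neq0 ?invr_eq0 ?gt_eqF //; lra.
exists ((q / a) `^ (q + 1)^-1); first by rewrite powR_gt0 ?divr_gt0.
by rewrite powRN_add_eq_kappa // lerDl ltW.
Qed.

Lemma exists_sum_powRN_add_le_kappa {n q eps} {a : 'cV[R]_n} :
  0 < q -> (forall i, 0 <= a i 0) -> 0 < eps ->
  exists2 r : 'cV[R]_n, (forall i, 0 < r i 0) &
    \sum_(i < n) (r i 0 `^ (- q) + a i 0 * r i 0)
    <= kappa q * \sum_(i < n) a i 0 `^ (q / (q + 1)) + eps.
Proof.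
move=> q0 a0 e0; have en : 0 < eps / n.+1%:R by rewrite divr_gt0.
have /fin_all_exists[t ht] : forall i, exists t, 0 < t /\
    t `^ (- q) + a i 0 * t <= kappa q * a i 0 `^ (q / (q + 1)) + eps / n.+1%:R.
  by move=> i; have [t t0 ht] := exists_powRN_add_le_kappa q0 (a0 i) en; exists t.
exists (\col_i t i) => [i | ]; first by rewrite mxE; case: (ht i).
under eq_bigr do rewrite mxE.
apply: le_trans (ler_sum _ (fun i _ => (ht i).2)) _.
rewrite big_split /= -mulr_sumr sumr_const card_ord lerD2l.
by rewrite -[_ *+ n]mulr_natr mulrAC ler_pdivrMr // ler_pM2l // ler_nat.
Qed.
End ScalarConjugate.

Section InnerProduct.
Context {R : realType} {m : nat}.
Implicit Types (u v z : 'cV[R]_m).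

Lemma dotvC u v : dotv u v = dotv v u.
Proof. by apply: eq_bigr => i _; rewrite mulrC. Qed.

Lemma dotvDr u v z : dotv u (v + z) = dotv u v + dotv u z.
Proof. by rewrite /dotv -big_split; apply: eq_bigr => i _; rewrite mxE mulrDr. Qed.

Lemma dotvNr u v : dotv u (- v) = - dotv u v.
Proof. by rewrite /dotv -sumrN; apply: eq_bigr => i _; rewrite mxE mulrN. Qed.

Lemma dotvBr u v z : dotv u (v - z) = dotv u v - dotv u z.
Proof. by rewrite dotvDr dotvNr. Qed.

Lemma dotvZr u v (k : R) : dotv u (k *: v) = k * dotv u v.
Proof. by rewrite /dotv mulr_sumr; apply: eq_bigr => i _; rewrite mxE mulrCA. Qed.

Lemma dotvBl u v z : dotv (v - z) u = dotv v u - dotv z u.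
Proof. by rewrite dotvC dotvBr !(dotvC u). Qed.

Lemma dotvZl u v (k : R) : dotv (k *: v) u = k * dotv v u.
Proof. by rewrite dotvC dotvZr dotvC. Qed.

Lemma dotv0r u : dotv u 0 = 0.
Proof. by rewrite /dotv big1 // => i _; rewrite mxE mulr0. Qed.

Lemma dotv_ge0 u : 0 <= dotv u u.
Proof. by apply: sumr_ge0 => i _; rewrite -expr2 sqr_ge0. Qed.

Lemma dotv_gt0 u : u != 0 -> 0 < dotv u u.
Proof.
apply: contraNT; rewrite -leNgt => uu0; apply/eqP/matrixP => i j.
rewrite (ord1 j) !mxE; apply/eqP; rewrite -sqrf_eq0 expr2.
have /psumr_eq0P-> // : dotv u u = 0 by apply/eqP; rewrite eq_le uu0 dotv_ge0.
by move=> k _; rewrite -expr2 sqr_ge0.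
Qed.

Lemma normv2 u : normv u ^+ 2 = dotv u u.
Proof. by rewrite /normv sqr_sqrtr // dotv_ge0. Qed.

Lemma normv_ge0 u : 0 <= normv u.
Proof. exact: sqrtr_ge0. Qed.

Lemma dotv_le_normv_mean u v : dotv u v <= normv u * (dotv v v + 1) / 2.
Proof.
have [->|u0] := eqVneq u 0; first by rewrite dotvC dotv0r /normv dotv0r sqrtr0 !mul0r.
have N0 : 0 < normv u by rewrite /normv sqrtr_gt0 dotv_gt0.
have := dotv_ge0 (normv u *: v - u).
rewrite !dotvBl !dotvBr !dotvZl !dotvZr -(normv2 u) (dotvC u v) => h.
have vv := dotv_ge0 v; nra.
Qed.

Lemma exists_dotv_normv u : exists2 w, dotv w w <= 1 & dotv u w = normv u.
Proof.
have [->|u0] := eqVneq u 0; first by exists 0; rewrite ?dotv0r // /normv dotv0r sqrtr0.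
have N0 : 0 < normv u by rewrite /normv sqrtr_gt0 dotv_gt0.
exists ((normv u)^-1 *: u); last by rewrite dotvZr -normv2; field; lra.
by rewrite dotvZl dotvZr -normv2 [leLHS](_ : _ = 1) //; field; lra.
Qed.
End InnerProduct.

Lemma dotv_trmx (R : realType) d n (M : 'M[R]_(d, n)) (u : 'cV[R]_n) (w : 'cV[R]_d) :
  dotv u (M^T *m w) = dotv (M *m u) w.
Proof.
rewrite /dotv.
under eq_bigr do rewrite mxE big_distrr /=.
under [RHS]eq_bigr do rewrite mxE big_distrl /=.
rewrite exchange_big /=; apply: eq_bigr => i _; apply: eq_bigr => j _.
by rewrite mxE; ring.
Qed.

Section Lagrangian.
Variables (R : realType) (d n : nat) (X : 'M[R]_(d, n)) (y : 'cV[R]_n).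
Variables (q C : R) (e : 'cV[R]_n).
Hypothesis hq : 0 < q.
Implicit Types (r xi alpha eta : 'cV[R]_n) (w : 'cV[R]_d) (beta lam : R).

Let Z := Zmat X y.

Lemma LagrE r xi w beta alpha eta lam : (forall i, 0 < r i 0) ->
  Lagr X y q C e r xi w beta alpha eta lam =
  (\sum_(i < n) (r i 0 `^ (- q) + alpha i 0 * r i 0)
   + dotv (C *: e - alpha - eta) xi - beta * dotv y alpha
   - dotv (Z *m alpha) w + lam / 2 * (dotv w w - 1))%:E.
Proof.
move=> r0; rewrite /Lagr /Phi.
have -> : (\sum_(i < n) theta q (r i ord0) = (\sum_(i < n) r i ord0 `^ (- q))%:E)%E.
  by rewrite -sumEFin; apply: eq_bigr => i _; rewrite /theta r0.
rewrite -!EFinD; congr EFin.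
rewrite normv2 !dotvBr dotvZr dotv_trmx !dotvBl dotvZl big_split /= [dotv alpha y]dotvC.
by rewrite -/(dotv alpha r); ring.
Qed.

Lemma Lagr_pinfty r xi w beta alpha eta lam : ~ (forall i, 0 < r i 0) ->
  Lagr X y q C e r xi w beta alpha eta lam = +oo%E.
Proof.
move=> /existsNP[i /negP]; rewrite -leNgt => ri.
rewrite /Lagr /Phi (bigD1 i) //= /theta ltNge ri /= addye ?addye //.
rewrite gt_eqF // (@lt_le_trans _ _ 0%E) // sume_ge0 // => j _.
by rewrite /theta; case: ifP => _; rewrite ?lee_fin ?powR_ge0 ?leey.
Qed.

Lemma dualfun_le_Lagr r xi w beta alpha eta lam :
  (dualfun X y q C e alpha eta lam <= Lagr X y q C e r xi w beta alpha eta lam)%E.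
Proof. by apply: ereal_inf_lbound; exists r, xi, w, beta. Qed.

Lemma dualfun_ge_Psi alpha : dual_feasible y C e alpha ->
  ((- Psi X y q alpha)%:E
   <= dualfun X y q C e alpha (C *: e - alpha) (normv (Z *m alpha)))%E.
Proof.
move=> [alpha_box y_alpha]; apply: le_ereal_inf_tmp => _ [r [xi [w [beta ->]]]].
have [r0 | /Lagr_pinfty->] := pselect (forall i, 0 < r i 0); last by rewrite leey.
rewrite LagrE // subrr dotvC dotv0r y_alpha mulr0 lee_fin /Psi -/Z.
have := dotv_le_normv_mean (Z *m alpha) w.
have : kappa q * \sum_(i < n) alpha i 0 `^ (q / (q + 1))
       <= \sum_(i < n) (r i 0 `^ (- q) + alpha i 0 * r i 0).
  rewrite mulr_sumr; apply: ler_sum => i _.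
  by apply: kappa_le_powRN_add => //; case: (alpha_box i).
lra.
Qed.

Lemma dualfun_le_Psi alpha eta lam : dual_feasible y C e alpha -> 0 <= lam ->
  (dualfun X y q C e alpha eta lam <= (- Psi X y q alpha)%:E)%E.
Proof.
move=> [alpha_box y_alpha] lam0; apply/lee_addgt0Pr => eps e0.
have [r r0 hr] := exists_sum_powRN_add_le_kappa hq (fun i => (alpha_box i).1) e0.
have [w w1 hw] := exists_dotv_normv (Z *m alpha).
apply: le_trans (dualfun_le_Lagr r 0 w 0 _ _ _) _.
rewrite LagrE // dotv0r mul0r hw -EFinD lee_fin /Psi -/Z.
have : lam / 2 * (dotv w w - 1) <= 0 by apply: mulr_ge0_le0; lra.
lra.
Qed.

Lemma dualfun_le_affine xi beta {alpha eta lam} : 0 <= lam ->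
  (dualfun X y q C e alpha eta lam <=
   (\sum_(i < n) (1 + alpha i 0)
    + dotv (C *: e - alpha - eta) xi - beta * dotv y alpha)%:E)%E.
Proof.
move=> lam0; apply: le_trans (dualfun_le_Lagr (const_mx 1) xi 0 beta _ _ _) _.
rewrite LagrE => [|i]; last by rewrite mxE.
under eq_bigr do rewrite mxE powR1 mulr1.
by rewrite !dotv0r lee_fin; lra.
Qed.

Lemma dualfun_Ny_dotv alpha eta lam : dotv y alpha != 0 -> 0 <= lam ->
  dualfun X y q C e alpha eta lam = -oo%E.
Proof.
move=> ya lam0; apply: eq_ninfty => M; pose B := \sum_(i < n) (1 + alpha i 0).
apply: le_trans (dualfun_le_affine 0 ((B - M) / dotv y alpha) lam0) _.
by rewrite dotv0r -/B lee_fin divfK //; lra.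
Qed.

Lemma dualfun_Ny_eta alpha eta lam : C *: e - alpha - eta != 0 -> 0 <= lam ->
  dualfun X y q C e alpha eta lam = -oo%E.
Proof.
move=> g0 lam0; apply: eq_ninfty => M; pose B := \sum_(i < n) (1 + alpha i 0).
set g := C *: e - alpha - eta in g0 *.
have gg : 0 < dotv g g by rewrite dotv_gt0.
apply: le_trans (dualfun_le_affine ((M - B) / dotv g g *: g) 0 lam0) _.
by rewrite dotvZr divfK ?gt_eqF // -/B lee_fin; lra.
Qed.

Lemma dualfun_Ny_neg alpha eta lam i : alpha i 0 < 0 -> 0 <= lam ->
  dualfun X y q C e alpha eta lam = -oo%E.
Proof.
move=> ai lam0; apply: eq_ninfty => M.
pose B := \sum_(j < n) (1 + alpha j 0).
pose T := 1 + `|B - M| / - alpha i 0.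
have T1 : 1 <= T by rewrite lerDl divr_ge0 // oppr_ge0 ltW.
pose r : 'cV[R]_n := \col_j (if j == i then T else 1).
have r0 j : 0 < r j 0 by rewrite mxE; case: ifP; lra.
apply: le_trans (dualfun_le_Lagr r 0 0 0 _ _ _) _.
rewrite LagrE // !dotv0r mul0r !subr0 lee_fin.
have -> : \sum_(j < n) (r j 0 `^ (- q) + alpha j 0 * r j 0) =
          \sum_(j < n) (r j 0 `^ (- q) + alpha j 0) + alpha i 0 * (T - 1).
  rewrite (bigD1 i) //= [in RHS](bigD1 i) //= !mxE eqxx.
  under eq_bigr => j ji do rewrite [in alpha j 0 * _]mxE (negbTE ji) mulr1.
  ring.
have : \sum_(j < n) (r j 0 `^ (- q) + alpha j 0) <= B.
  apply: ler_sum => j _; rewrite lerD2r -(powRr0 (r j 0)).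
  by apply: ler_powR; [rewrite mxE; case: ifP; lra | rewrite oppr_le0 ltW].
have -> : alpha i 0 * (T - 1) = - `|B - M| by rewrite /T addrAC subrr add0r; field; lra.
have := ler_norm (B - M); lra.
Qed.

Lemma dualfun_infeasible alpha eta lam : ~ dual_feasible y C e alpha ->
  (forall i, 0 <= eta i 0) -> 0 <= lam -> dualfun X y q C e alpha eta lam = -oo%E.
Proof.
move=> alpha_infeas eta0 lam0.
have [y_alpha | /dualfun_Ny_dotv-> //] := eqVneq (dotv y alpha) 0.
have [i /not_andP alpha_i] : exists i, ~ (0 <= alpha i 0 /\ alpha i 0 <= C * e i 0).
  apply: contra_notP alpha_infeas => no_bad; split => // i.
  by apply: contra_notP no_bad => bad; exists i.
have [/dualfun_Ny_neg -> // | ai0] := ltP (alpha i 0) 0.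
apply: dualfun_Ny_eta => //; apply/eqP => /matrixP/(_ i 0).
rewrite !mxE; have := eta0 i; case: alpha_i; lra.
Qed.

Lemma sup_dualfun_alpha alpha :
  ereal_sup [set v | exists eta lam, (forall i, 0 <= eta i 0) /\ 0 <= lam /\
                       v = dualfun X y q C e alpha eta lam]
  = (if `[< dual_feasible y C e alpha >] then (- Psi X y q alpha)%:E else -oo)%E.
Proof.
have [feas | infeas] := pselect (dual_feasible y C e alpha); last first.
  rewrite asboolF //; apply/eqP; rewrite -leeNy_eq.
  by apply: ge_ereal_sup => _ [eta [lam [eta0 [lam0 ->]]]]; rewrite dualfun_infeasible.
rewrite asboolT //; apply/eqP; rewrite eq_le; apply/andP; split.
  by apply: ge_ereal_sup => _ [eta [lam [_ [lam0 ->]]]]; exact: dualfun_le_Psi.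
apply: le_trans (dualfun_ge_Psi alpha feas) _; apply: ereal_sup_ubound.
exists (C *: e - alpha), (normv (Z *m alpha)); split; last by split; first exact: normv_ge0.
by move=> i; rewrite !mxE subr_ge0; case: (feas.1 i).
Qed.

Lemma sup_dualfun :
  ereal_sup [set v | exists alpha eta lam, (forall i, 0 <= eta i 0) /\ 0 <= lam /\
                       v = dualfun X y q C e alpha eta lam]
  = (- ereal_inf [set (Psi X y q alpha)%:E | alpha in dual_feasible y C e])%E.
Proof.
apply/eqP; rewrite eq_le; apply/andP; split.
  apply: ge_ereal_sup => _ [alpha [eta [lam [eta0 [lam0 ->]]]]].
  have [feas | infeas] := pselect (dual_feasible y C e alpha); last first.
    by rewrite dualfun_infeasible // leNye.
  apply: le_trans (dualfun_le_Psi alpha eta lam feas lam0) _.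
  by rewrite EFinN leeN2; apply: ereal_inf_lbound; exists alpha.
rewrite leeNl; apply: le_ereal_inf_tmp => _ [alpha feas <-]; rewrite leeNl -EFinN.
have := sup_dualfun_alpha alpha; rewrite asboolT // => <-; apply: le_ereal_sup.
by move=> _ [eta [lam [eta0 [lam0 ->]]]]; exists alpha, eta, lam.
Qed.

End Lagrangian.

Theorem proposition1 (R : realType) (n d : nat) (hn : (1 <= n)%N) (hd : (1 <= d)%N)
  (X : 'M[R]_(d, n)) (y : 'cV[R]_n) (hy : forall i, y i 0 = 1 \/ y i 0 = -1)
  (q C : R) (hq : 0 < q) (hC : 0 < C)
  (e : 'cV[R]_n) (he : forall i, 0 < e i 0)
  (he1 : (\big[Num.max/0]_(i < n) `|e i 0|) = 1) :
  (* after maximizing the dual function over eta >= 0, lambda >= 0,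
     the dual objective in alpha is -Psi(alpha) on the feasible set
     and -oo outside it *)
  (forall alpha : 'cV[R]_n,
     ereal_sup [set v | exists (eta : 'cV[R]_n) (lam : R),
                  (forall i, 0 <= eta i 0) /\ 0 <= lam /\
                  v = dualfun X y q C e alpha eta lam]
     = (if `[< dual_feasible y C e alpha >] then (- Psi X y q alpha)%:E
        else -oo)%E)
  /\
  (* hence the Lagrangian dual value equals - min { Psi(alpha) | feasible } *)
  ereal_sup [set v | exists (alpha eta : 'cV[R]_n) (lam : R),
               (forall i, 0 <= eta i 0) /\ 0 <= lam /\
               v = dualfun X y q C e alpha eta lam]
  = (- ereal_inf [set (Psi X y q alpha)%:E | alpha in dual_feasible y C e])%E.
Proof.
by split=> [alpha|]; [apply: sup_dualfun_alpha | apply: sup_dualfun].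
Qed.
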